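(* $\mathsf{AP}(R_1,R_1)=\operatorname{Pol}(R_1,R'_1)=\mathsf{\Omega(1)}$.
   Context: Tuples in $\{0,1\}^4$ are written as strings $abcd$. The relations $R_1,\dots,R_5\subseteq\{0,1\}^4$ are $R_1=\{0000,1000,0100,1100,1010,0110,1001,0101,0011,1011,0111,1111\}$, $R_2=\{0000,1000,0100,1100,1010,0101,0011,1111\}$, $R_3=\{0000,1100,1010,0101,0011,1011,0111,1111\}$, $R_4=\{0000,1100,1010,0101,0011,1111\}$, $R_5=\{0000,1100,1010,0110,1001,0101,0011,1111\}$. For $R,S\subseteq\{0,1\}^4$, a Boolean function $f\colon\{0,1\}^n\to\{0,1\}$ is analogy-preserving relative to $(R,S)$ if for all $\mathbf{a},\mathbf{b},\mathbf{c},\mathbf{d}\in\{0,1\}^n$ with $(a_i,b_i,c_i,d_i)\in R$ for every $i$ and such that $(f(\mathbf{a}),f(\mathbf{b}),f(\mathbf{c}),x)\in S$ for some $x\in\{0,1\}$, we have $(f(\mathbf{a}),f(\mathbf{b}),f(\mathbf{c}),f(\mathbf{d}))\in S$; $\mathsf{AP}(R,S)$ is the set of all such functions of all arities. $S':=S\cup\{(a,b,c,d)\mid\nexists x\colon(a,b,c,x)\in S\}$, and $\operatorname{Pol}(R,S)$ is the set of Boolean functions $f$ with $f(\mathbf{a}_1,\dots,\mathbf{a}_n)\in S$ (componentwise) for all $\mathbf{a}_1,\dots,\mathbf{a}_n\in R$. $\mathsf{\Omega(1)}$ is the set of all Boolean functions (of all arities) that are constant, a projection, or the negation of a projection. *)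

From mathcomp Require Import all_boot.
Set Implicit Arguments. Unset Strict Implicit. Unset Printing Implicit Defensive.

Definition quad := (bool * bool * bool * bool)%type.

Definition qd (a b c d : nat) : quad := (a == 1, b == 1, c == 1, d == 1).

Definition rel4 := quad -> bool.

Definition R1 : rel4 := fun t => t \in
  [:: qd 0 0 0 0; qd 1 0 0 0; qd 0 1 0 0; qd 1 1 0 0; qd 1 0 1 0; qd 0 1 1 0;
      qd 1 0 0 1; qd 0 1 0 1; qd 0 0 1 1; qd 1 0 1 1; qd 0 1 1 1; qd 1 1 1 1].

Definition boolfun (n : nat) := {ffun 'I_n -> bool} -> bool.

Definition AP (R S : rel4) (n : nat) (f : boolfun n) : Prop :=
  forall a b c d : {ffun 'I_n -> bool},
    (forall i : 'I_n, R (a i, b i, c i, d i)) ->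
    (exists x : bool, S (f a, f b, f c, x)) ->
    S (f a, f b, f c, f d).

Definition relPrime (S : rel4) : rel4 :=
  fun t => let: (a, b, c, d) := t in
    S (a, b, c, d) || ~~ [exists x : bool, S (a, b, c, x)].

(* Pol(R,S): f applied componentwise to any n tuples of R lands in S.
   The n tuples a_1..a_n ∈ R are given by their four coordinate rows
   a, b, c, d : {0,1}^n, i.e. a_i = (a i, b i, c i, d i). *)
Definition Pol (R S : rel4) (n : nat) (f : boolfun n) : Prop :=
  forall a b c d : {ffun 'I_n -> bool},
    (forall i : 'I_n, R (a i, b i, c i, d i)) ->
    S (f a, f b, f c, f d).

Definition Omega1 (n : nat) (f : boolfun n) : Prop :=
  (exists c : bool, forall x, f x = c) \/
  (exists i : 'I_n, forall x, f x = x i) \/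
  (exists i : 'I_n, forall x, f x = ~~ x i).

From mathcomp Require Import all_boot.

Set Implicit Arguments.
Unset Strict Implicit.
Unset Printing Implicit Defensive.

(* [R1] is the relation "a = b implies c = d", so a polymorphism of [R1] is a
   function f such that whenever the set of coordinates where x and y agree
   is contained in the set where u and v agree, f x = f y forces f u = f v.
   If such an f is not constant, walking from one input to another one
   coordinate at a time yields inputs p, q that differ only at some i but
   have f p <> f q.  Any x with x i = p i then agrees with q at most where p
   does, so f x = f q is impossible: f x = f p.  Hence f only depends on
   x i, and takes both values, so it is x i or its negation. *)

Lemma R1E (a b c d : bool) : R1 (a, b, c, d) = (a != b) || (c == d).
Proof. by case: a; case: b; case: c; case: d. Qed.

Lemma relPrime_R1 (t : quad) : relPrime R1 t = R1 t.
Proof.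
case: t => [[[a b] c] d]; rewrite /relPrime.
suff -> : [exists x, R1 (a, b, c, x)] by rewrite orbF.
by apply/existsP; exists c; rewrite R1E eqxx orbT.
Qed.

Definition agreement_monotone {n : nat} (f : boolfun n) : Prop :=
  forall a b c d : {ffun 'I_n -> bool},
    (forall i, a i = b i -> c i = d i) -> f a = f b -> f c = f d.

Section PolR1.
Variables (n : nat) (f : boolfun n).

Lemma AP_R1 : AP R1 R1 f <-> Pol R1 R1 f.
Proof.
split=> fP a b c d abcd; last by move=> _; exact: fP.
by apply: fP => //; exists (f c); rewrite R1E eqxx orbT.
Qed.

Lemma Pol_relPrime_R1 : Pol R1 (relPrime R1) f <-> Pol R1 R1 f.
Proof. by split=> fP a b c d /fP; rewrite relPrime_R1. Qed.

Lemma Pol_R1_agreement : Pol R1 R1 f <-> agreement_monotone f.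
Proof.
split=> fP a b c d abcd.
  move=> fab; apply/eqP; move: (fP a b c d); rewrite R1E fab eqxx; apply=> i.
  by rewrite R1E; case: eqP => //= /abcd ->.
rewrite R1E; case: eqP => //= fab; apply/eqP/(fP a b) => // i.
by move: (abcd i); rewrite R1E; case: eqP => // _ /eqP.
Qed.

Lemma Omega1_Pol_R1 : Omega1 f -> Pol R1 R1 f.
Proof.
case=> [[c fc] | [[i fi] | [i fi]]] a b c' d abcd.
- by rewrite !fc R1E eqxx orbT.
- by rewrite !fi; exact: abcd.
- by move: (abcd i); rewrite !fi !R1E; case: (a i); case: (b i); case: (c' i); case: (d i).
Qed.

End PolR1.

Lemma exists_step_neq (T : eqType) (g : nat -> T) (m : nat) :
  g 0 != g m -> exists2 k, k < m & g k != g k.+1.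
Proof.
elim: m => [|m IHm]; first by rewrite eqxx.
case: (eqVneq (g m) (g m.+1)) => [<- /IHm [k km gk] | gm _].
  by exists k => //; exact: ltnW.
by exists m.
Qed.

Lemma exists_neighbours_neq (T : Type) (n : nat) (g : {ffun 'I_n -> T} -> bool)
    (p q : {ffun 'I_n -> T}) :
  g p != g q ->
  exists i : 'I_n, exists p' q' : {ffun 'I_n -> T},
    g p' != g q' /\ forall j, j != i -> p' j = q' j.
Proof.
pose mix k := [ffun j : 'I_n => if j < k then q j else p j].
have mix0 : mix 0 = p by apply/ffunP => j; rewrite ffunE.
have mixn : mix n = q by apply/ffunP => j; rewrite ffunE ltn_ord.
rewrite -mix0 -mixn => /(@exists_step_neq _ (fun k => g (mix k)) n) [k kn gk].
exists (Ordinal kn), (mix k), (mix k.+1); split=> // j ji.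
rewrite !ffunE ltnS (leq_eqVlt j).
suff /negbTE -> : nat_of_ord j != k by [].
by apply: contra ji => /eqP jk; apply/eqP/val_inj.
Qed.

Section AgreementMonotone.
Variables (n : nat) (f : boolfun n).
Hypothesis f_mono : agreement_monotone f.

Lemma agreement_monotone_neighbour (p q : {ffun 'I_n -> bool}) (i : 'I_n) :
  f p != f q -> (forall j, j != i -> p j = q j) ->
  forall x : {ffun 'I_n -> bool}, x i = p i -> f x = f p.
Proof.
move=> fpq pq x xi; apply/eqP; apply: contraT => fxp.
have fxq : f x = f q by move: fpq fxp; case: (f x); case: (f p); case: (f q).
suff fpq' : f p = f q by rewrite fpq' eqxx in fpq.
apply: (f_mono _ fxq) => j.
by case: (eqVneq j i) => [-> | /pq //]; rewrite xi.
Qed.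

Lemma agreement_monotone_dictator (p q : {ffun 'I_n -> bool}) (i : 'I_n) :
  f p != f q -> (forall j, j != i -> p j = q j) ->
  forall x : {ffun 'I_n -> bool}, f x = ((x i == p i) == f p).
Proof.
move=> fpq pq x; have fqp : f q != f p by rewrite eq_sym.
have pqi : p i != q i.
  apply: contra fpq => /eqP pqi; suff -> : p = q by [].
  by apply/ffunP => j; case: (eqVneq j i) => [-> | /pq].
have qp j : j != i -> q j = p j by move=> /pq.
case: (eqVneq (x i) (p i)) => [xi | xpi].
  by rewrite (agreement_monotone_neighbour fpq pq xi); case: (f p).
have xi : x i = q i by move: xpi pqi; case: (x i); case: (p i); case: (q i).
rewrite (agreement_monotone_neighbour fqp qp xi).
by move: fqp; case: (f p); case: (f q).
Qed.

Lemma agreement_monotone_Omega1 : Omega1 f.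
Proof.
pose z : {ffun 'I_n -> bool} := [ffun => false].
have [f_const | /forallPn [y fyz]] := boolP [forall x, f x == f z].
  by left; exists (f z) => x; apply/eqP/(forallP f_const).
have [i [p [q [fpq pq]]]] := exists_neighbours_neq fyz.
have fE := agreement_monotone_dictator fpq pq.
right; case: (p i) (f p) fE => -[] fE; [left | right | right | left];
  by exists i => x; rewrite fE; case: (x i).
Qed.

End AgreementMonotone.

Theorem mainTheorem7 :
  forall (n : nat) (f : boolfun n),
    (AP R1 R1 f <-> Pol R1 (relPrime R1) f) /\
    (Pol R1 (relPrime R1) f <-> Omega1 f).
Proof.
move=> n f; have polE := Pol_relPrime_R1 f.
split; first exact: iff_trans (AP_R1 f) (iff_sym polE).
apply: iff_trans polE _; split; last exact: Omega1_Pol_R1.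
by move/Pol_R1_agreement; exact: agreement_monotone_Omega1.
Qed.
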